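(* Let $X$ be a metric space, $R\ge0$, $K>1$, and let $\alpha\colon S\to X$ be a $\frac1K$-almost isometric $R$-circle. Then $d(\alpha(p),\alpha(q))\ge d_S(p,q)-\frac{K-1}{K}\cdot\frac{|S|}{2}-2R$ for all $p,q\in S$.
   Context: A Riemannian circle $S$ is a circle with its length metric, of length $|S|$. An $R$-circle is a map $\alpha\colon S\to X$ from a Riemannian circle with $d(\alpha(p),\alpha(q))\le d_S(p,q)+R$ for all $p,q\in S$; it is $\frac1K$-almost isometric if $d(\alpha(p),\alpha(\bar p))\ge\frac1K\cdot\frac{|S|}2$ for every pair of antipodal points $p,\bar p\in S$. *)

From Stdlib Require Import Reals Lra.
Open Scope R_scope.

Record MetricSpace := {
  carrier :> Type;
  mdist : carrier -> carrier -> R;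
  mdist_nonneg : forall x y, 0 <= mdist x y;
  mdist_eq0 : forall x y, mdist x y = 0 <-> x = y;
  mdist_sym : forall x y, mdist x y = mdist y x;
  mdist_tri : forall x y z, mdist x z <= mdist x y + mdist y z
}.

(* The Riemannian circle S of length L > 0 is modelled as the set of points
   [0, L) (i.e. R / L Z with a fundamental domain), with length metric
   d_S(s,t) = min(|s-t|, L - |s-t|). *)
Definition on_circle (L s : R) : Prop := 0 <= s < L.

Definition circ_dist (L s t : R) : R := Rmin (Rabs (s - t)) (L - Rabs (s - t)).

Definition antipode (L s : R) : R := if Rlt_dec s (L / 2) then s + L / 2 else s - L / 2.

Definition is_R_circle (X : MetricSpace) (L Rr : R) (alpha : R -> X) : Prop :=
  forall p q, on_circle L p -> on_circle L q ->
    mdist X (alpha p) (alpha q) <= circ_dist L p q + Rr.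

Definition almost_isometric (X : MetricSpace) (L K : R) (alpha : R -> X) : Prop :=
  forall p, on_circle L p ->
    mdist X (alpha p) (alpha (antipode L p)) >= (1 / K) * (L / 2).

From Stdlib Require Import Reals Lra.
Open Scope R_scope.

(* Let p' be the antipode of p.  On the circle, q lies on a shortest arc from p
   to p', so d_S(p,q) + d_S(q,p') = |S|/2.  By the triangle inequality in X,
   d(a p, a q) >= d(a p, a p') - d(a q, a p') >= |S|/(2K) - (d_S(q,p') + R),
   which is the claim with R in place of 2R. *)

Lemma mdist_ge_sub (X : MetricSpace) (x y z : X) :
  mdist X x y >= mdist X x z - mdist X y z.
Proof.
  pose proof (mdist_tri X x y z).
  pose proof (mdist_sym X y z).
  lra.
Qed.

Lemma antipode_on_circle (L p : R) :
  0 < L -> on_circle L p -> on_circle L (antipode L p).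
Proof.
  unfold on_circle, antipode; intros hL hp.
  destruct (Rlt_dec p (L / 2)); lra.
Qed.

Lemma circ_dist_add_antipode (L p q : R) :
  0 < L -> on_circle L p -> on_circle L q ->
  circ_dist L p q + circ_dist L q (antipode L p) = L / 2.
Proof.
  unfold on_circle, antipode, circ_dist, Rmin, Rabs; intros hL hp hq.
  destruct (Rlt_dec p (L / 2));
  repeat match goal with
  | |- context [Rcase_abs ?x] => destruct (Rcase_abs x)
  | |- context [Rle_dec ?a ?b] => destruct (Rle_dec a b)
  end; lra.
Qed.

Lemma R_circle_almost_isometric_lower_bound
  (X : MetricSpace) (Rr K L : R) (alpha : R -> X) (p q : R) :
  0 < L -> is_R_circle X L Rr alpha -> almost_isometric X L K alpha ->
  on_circle L p -> on_circle L q ->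
  mdist X (alpha p) (alpha q) >= circ_dist L p q - (1 - 1 / K) * (L / 2) - Rr.
Proof.
  intros hL hcirc hiso hp hq.
  pose proof (antipode_on_circle L p hL hp) as hp'.
  pose proof (circ_dist_add_antipode L p q hL hp hq).
  pose proof (hiso p hp).
  pose proof (hcirc q (antipode L p) hq hp').
  pose proof (mdist_ge_sub X (alpha p) (alpha q) (alpha (antipode L p))).
  lra.
Qed.

Theorem lemma3p1 (X : MetricSpace) (Rr K L : R) (alpha : R -> X)
  (hR : 0 <= Rr) (hK : 1 < K) (hL : 0 < L)
  (hcirc : is_R_circle X L Rr alpha)
  (hiso : almost_isometric X L K alpha) :
  forall p q, on_circle L p -> on_circle L q ->
    mdist X (alpha p) (alpha q) >=
      circ_dist L p q - ((K - 1) / K) * (L / 2) - 2 * Rr.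
Proof.
  intros p q hp hq.
  pose proof (R_circle_almost_isometric_lower_bound X Rr K L alpha p q
                hL hcirc hiso hp hq).
  replace ((K - 1) / K) with (1 - 1 / K) by (field; lra).
  lra.
Qed.
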